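(* Let $S_1\subseteq S_2\subseteq\mathbb{Z}^k$ and $T\subseteq\mathbb{Z}^k$ be finite sets such that $S_1$ and $S_2$ have the same linear span over $\mathbb{Q}$. If $(S_1,T)$ is cancellable, then $(S_2,T)$ is cancellable.
   Context: For finite sets $S,T\subseteq\mathbb{Z}^k$, the pair $(S,T)$ is called cancellable if there exist integers $x_u\ge 1$ for $u\in S$ and $y_v\ge 0$ for $v\in T$ such that $\sum_{u\in S}x_u u+\sum_{v\in T}y_v v=0$. *)

From HB Require Import structures.
From mathcomp Require Import all_boot all_order all_algebra.
Set Implicit Arguments. Unset Strict Implicit. Unset Printing Implicit Defensive.
Import Order.TTheory GRing.Theory Num.Theory.
Local Open Scope ring_scope.

(* Vectors of Z^k are row vectors 'rV[int]_k; finite subsets of Z^k are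
   duplicate-free sequences (uniq s). *)

Definition cancellable (k : nat) (S T : seq 'rV[int]_k) : Prop :=
  exists (x y : 'rV[int]_k -> int),
    (forall u, u \in S -> 1 <= x u) /\
    (forall v, v \in T -> 0 <= y v) /\
    \sum_(u <- S) x u *: u + \sum_(v <- T) y v *: v = 0.

Definition ratmx (k : nat) (S : seq 'rV[int]_k) : 'M[rat]_(size S, k) :=
  \matrix_(i < size S) map_mx (fun z : int => z%:~R) (nth 0 S i).

Definition same_Qspan (k : nat) (S1 S2 : seq 'rV[int]_k) : bool :=
  (ratmx S1 == ratmx S2)%MS.

From HB Require Import structures.
From mathcomp Require Import all_boot all_order all_algebra.
From mathcomp Require Import zify.
Set Implicit Arguments. Unset Strict Implicit. Unset Printing Implicit Defensive.
Import Order.TTheory GRing.Theory Num.Theory.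
Local Open Scope ring_scope.

(* Let z be the sum of the vectors of S2 not in S1. It lies in the Q-span of
   S2, hence of S1, so clearing denominators gives d > 0 and integers c_u with
   d z = sum_u c_u u. If (x, y) witnesses that (S1, T) is cancellable and N
   exceeds every |c_u|, then the coefficients N x_u - c_u >= 1 on S1, d on
   S2 \ S1 and N y_v on T witness that (S2, T) is cancellable. *)

Lemma scale_int_mx (m n : nat) (A : 'M[rat]_(m, n)) :
  exists2 d : int, 0 < d & exists B : 'M[int]_(m, n), d%:~R *: A = map_mx intr B.
Proof.
set d := \prod_(ij : 'I_m * 'I_n) denq (A ij.1 ij.2).
exists d; first by apply: prodr_gt0 => ij _; rewrite denq_gt0.
exists (\matrix_(i, j) numq (d%:~R * A i j)); apply/matrixP => i j; rewrite !mxE.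
have -> : d = (\prod_(ij | ij != (i, j)) denq (A ij.1 ij.2)) * denq (A i j).
  by rewrite /d (bigD1 (i, j)) //= mulrC.
by rewrite intrM -mulrA [_ * A i j]mulrC -numqE -intrM numq_int.
Qed.

Lemma big_nth_uniq_coef (T : eqType) (R : nzRingType) (V : lmodType R)
    (S : seq T) (x0 : T) (f : T -> V) (b : 'I_(size S) -> R) :
  uniq S -> exists c : T -> R,
    \sum_(i < size S) b i *: f (nth x0 S i) = \sum_(u <- S) c u *: f u.
Proof.
move=> uS; exists (fun u => nth 0 [seq b i | i <- enum 'I_(size S)] (index u S)).
rewrite (big_nth x0) big_mkord; apply: eq_bigr => i _.
by rewrite index_uniq // (nth_map i) ?size_enum_ord // nth_ord_enum.
Qed.

Lemma big_subset_split (T : eqType) (V : nmodType) (S1 S2 : seq T) (F : T -> V) :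
  uniq S1 -> uniq S2 -> {subset S1 <= S2} ->
  \sum_(u <- S2) F u = \sum_(u <- S1) F u + \sum_(u <- S2 | u \notin S1) F u.
Proof.
move=> uS1 uS2 S12; rewrite (bigID (mem S1)) /= -big_filter.
congr (_ + _); apply: perm_big; apply: uniq_perm; rewrite ?filter_uniq // => u.
by rewrite mem_filter andb_idr //; apply: S12.
Qed.

Definition seqmx (k : nat) (S : seq 'rV[int]_k) : 'M[int]_(size S, k) :=
  \matrix_(i < size S) nth 0 S i.

Lemma ratmxE (k : nat) (S : seq 'rV[int]_k) : ratmx S = map_mx intr (seqmx S).
Proof. by apply/matrixP => i j; rewrite !mxE. Qed.

Lemma mem_ratmx (k : nat) (S : seq 'rV[int]_k) (u : 'rV[int]_k) :
  u \in S -> (map_mx intr u <= ratmx S)%MS.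
Proof.
rewrite -index_mem => uS; apply: (eq_row_sub (Ordinal uS)).
by rewrite rowK nth_index // -index_mem.
Qed.

Lemma map_mx_intr_inj (R : numDomainType) (m n : nat) :
  injective (map_mx intr : 'M[int]_(m, n) -> 'M[R]_(m, n)).
Proof.
by move=> A B /matrixP AB; apply/matrixP => i j; have := AB i j; rewrite !mxE => /intr_inj.
Qed.

Lemma Zspan_multiple (k : nat) (S : seq 'rV[int]_k) (v : 'rV[int]_k) :
  uniq S -> (map_mx intr v <= ratmx S)%MS ->
  exists2 d : int, 0 < d &
    exists c : 'rV[int]_k -> int, d *: v = \sum_(u <- S) c u *: u.
Proof.
move=> uS /submxP [a va]; have [d d_gt0 [b db]] := scale_int_mx a.
exists d => //; have [c cE] := big_nth_uniq_coef 0 id (fun i => b 0 i) uS.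
exists c; rewrite -cE.
under eq_bigr do rewrite -[nth 0 S _](rowK (fun i => nth 0 S i)).
rewrite -mulmx_sum_row; apply: (@map_mx_intr_inj rat).
by rewrite map_mxZ map_mxM -ratmxE -db -scalemxAl -va.
Qed.

Lemma cancellable_extend (k : nat) (S1 S2 T : seq 'rV[int]_k) (d : int)
    (c : 'rV[int]_k -> int) :
  uniq S1 -> uniq S2 -> {subset S1 <= S2} -> 0 < d ->
  d *: \sum_(w <- S2 | w \notin S1) w = \sum_(u <- S1) c u *: u ->
  cancellable S1 T -> cancellable S2 T.
Proof.
move=> uS1 uS2 S12 d_gt0 dE [x [y [x_ge1 [y_ge0 xy0]]]].
set N := 1 + \sum_(u <- S1) `|c u|.
have N_gt0 : 0 < N by rewrite ltr_pwDl // sumr_ge0.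
have c_lt_N u : u \in S1 -> c u < N.
  move=> uS1'; apply: le_lt_trans (ler_norm _) _.
  by rewrite /N (bigD1_seq u) //= addrCA ltrDl ltr_pwDl // sumr_ge0.
exists (fun u => if u \in S1 then N * x u - c u else d), (fun v => N * y v).
split; [|split].
- move=> u _; case: ifP => // uS1'.
  have := c_lt_N u uS1'; have := ler_peMr (ltW N_gt0) (x_ge1 u uS1').
  by lia.
- by move=> v vT; exact: mulr_ge0 (ltW N_gt0) (y_ge0 v vT).
- rewrite (big_subset_split _ uS1 uS2 S12).
  rewrite (eq_big_seq (fun u => (N * x u - c u) *: u)); last by move=> u ->.
  rewrite [\sum_(u <- S2 | _) _](eq_bigr (fun u => d *: u)); last by move=> u /negbTE ->.
  rewrite -scaler_sumr dE.
  under eq_bigr do rewrite scalerBl -scalerA.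
  under [X in _ + _ + X]eq_bigr do rewrite -scalerA.
  by rewrite sumrB -!scaler_sumr subrK -scalerDr xy0 scaler0.
Qed.

Theorem mainTheorem7 (k : nat) (S1 S2 T : seq 'rV[int]_k) :
  uniq S1 -> uniq S2 -> uniq T ->
  {subset S1 <= S2} ->
  same_Qspan S1 S2 ->
  cancellable S1 T -> cancellable S2 T.
Proof.
move=> uS1 uS2 _ S12 /andP [_ S21].
set z := \sum_(w <- S2 | w \notin S1) w.
have z_span : (map_mx intr z <= ratmx S1)%MS.
  apply: submx_trans S21; rewrite map_mx_sum big_seq_cond.
  by apply: summx_sub => w /andP [wS2 _]; apply: mem_ratmx.
have [d d_gt0 [c dz]] := Zspan_multiple uS1 z_span.
exact: cancellable_extend uS1 uS2 S12 d_gt0 dz.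
Qed.
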